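(* Let $d\ge1$ and $0\le r<d$ be integers, and let $\zeta_{2d}=e^{\pi \mathrm{i}/d}$. Then $\operatorname{num}(r,\zeta_{2d})\neq 0$.
   Context: A partition $\lambda$ of $n\ge 0$ (written $\lambda\vdash n$) is a finite nonincreasing sequence of positive integers summing to $n$; $m_\lambda(i)$ denotes the number of parts of $\lambda$ equal to $i$. For $\lambda\vdash n$ define $h_\lambda(x)=\prod_{i\ge1}(1+x^i)^{\lfloor n/i\rfloor-m_\lambda(i)}\in\mathbb{Z}[x]$. Let $G(n,x)=\gcd\{h_\lambda(x):\lambda\vdash n\}$ in $\mathbb{Z}[x]$ (normalized with positive leading coefficient) and $\operatorname{num}(n,x)=\frac{1}{G(n,x)}\sum_{\lambda\vdash n}h_\lambda(x)$. Conventions for $n=0$: $G(0,x)=1$, $h_\emptyset(x)=1$, $\operatorname{num}(0,x)=1$. *)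

From mathcomp Require Import all_boot all_algebra all_field.
Set Implicit Arguments. Unset Strict Implicit. Unset Printing Implicit Defensive.
Import GRing.Theory Num.Theory.
Local Open Scope ring_scope.

(* A partition of n is encoded as its zero-padded sequence of parts
   f 0 >= f 1 >= ... >= f (n-1) >= 0 with sum n (at most n nonzero parts,
   each <= n); the positive parts are the nonzero entries. *)
Definition partn (n : nat) := {ffun 'I_n -> 'I_n.+1}.

Definition is_partn (n : nat) (f : partn n) : bool :=
  [forall i : 'I_n, forall j : 'I_n, (i <= j)%N ==> (f j <= f i)%N]
  && (\sum_(i < n) (f i : nat) == n)%N.

(* m_lambda(k) : number of parts equal to k (used for k >= 1) *)
Definition mult (n : nat) (f : partn n) (k : nat) : nat :=
  #|[set i : 'I_n | (f i : nat) == k]|.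

(* h_lambda(x) = prod_{i>=1} (1+x^i)^(floor(n/i) - m_lambda(i));
   factors with i > n are 1. *)
Definition hpoly (n : nat) (f : partn n) : {poly int} :=
  \prod_(1 <= i < n.+1) (1 + 'X^i) ^+ (n %/ i - mult f i).

Definition sum_h (n : nat) : {poly int} :=
  \sum_(f : partn n | is_partn f) hpoly f.

Definition zdvd (q p : {poly int}) : Prop := exists s : {poly int}, p = q * s.

Definition is_G (n : nat) (g : {poly int}) : Prop :=
  (forall f : partn n, is_partn f -> zdvd g (hpoly f)) /\
  (forall q : {poly int}, (forall f : partn n, is_partn f -> zdvd q (hpoly f)) -> zdvd q g) /\
  0 < lead_coef g.

(* zeta_{2d} = e^{pi i / d}: d.-root (-1) is the d-th root of -1 with
   minimal nonnegative argument *)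
Definition zeta2 (d : nat) : algC := d.-root (-1).

(* For 0 < i < d, 1 + ζ^i = ζ^(i/2) * 2 cos(π i / 2d), so (1 + ζ^i) / (1 + ζ)^i is a
   positive real.  As the weighted exponent sum of h_λ does not depend on λ, every
   h_λ(ζ) is (1 + ζ)^K times a positive real, hence so is their sum G(r,ζ) num(r,ζ).
   In algC, ζ = d.-root (-1) is only characterised as the root of y^d = -1 of
   largest real part in the upper half plane, so the positivity is proved with the
   Lucas sequence V_k(1, t), for which (1 + y^k) / (1 + y)^k = V_k(y / (1 + y)^2):
   the least root t > 1/4 of V_1 ... V_d comes from a root y of y^d = -1 in the upper
   half plane, and the maximality of Re ζ forces y = ζ, so that V_i(t) > 0 for i < d. *)

From Pilot Require Import Defs.
From mathcomp Require Import all_boot all_algebra all_field.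
From mathcomp Require Import all_order polyrcf.
From mathcomp Require Import ring lra.
Import Defs. (* [partn] is the type of Defs, not the pi-part of prime.v *)
Import Order.TTheory GRing.Theory Num.Theory.
Set Implicit Arguments. Unset Strict Implicit. Unset Printing Implicit Defensive.
Local Open Scope ring_scope.

Lemma sum_mult_partn n (f : partn n) : is_partn f ->
  (\sum_(i < n.+1) i * mult f i)%N = n.
Proof.
case/andP=> _ /eqP sum_f; rewrite -[RHS]sum_f.
rewrite (partition_big f xpredT) //=; apply: eq_bigr => i _.
rewrite (eq_bigr (fun=> i : nat)) => [|j /eqP <-] //.
rewrite sum_nat_const mulnC /mult; congr (_ * _)%N.
by apply: eq_card => j; rewrite inE.
Qed.

Definition hdeg n : nat := (\sum_(1 <= i < n.+1) i * (n %/ i) - n)%N.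

Lemma hpoly_exponent_weight n (f : partn n) : is_partn f ->
  (\sum_(1 <= i < n.+1) i * (n %/ i - mult f i))%N = hdeg n.
Proof.
move=> pf; have weight_f := sum_mult_partn pf.
have le_mult i : (0 < i < n.+1)%N -> (i * mult f i <= i * (n %/ i))%N.
  case/andP=> i_gt0 lt_in; rewrite leq_mul2l leq_divRL // mulnC -{2}weight_f.
  by rewrite (bigD1 (Ordinal lt_in)) //= leq_addr orbT.
rewrite big_nat_cond (eq_bigr (fun i => i * (n %/ i) - i * mult f i)%N) => [|i _];
  last by rewrite mulnBr.
rewrite sumnB => [|i /andP[/le_mult //]]; rewrite -!big_nat_cond; congr (_ - _)%N.
rewrite -[RHS]weight_f -(big_mkord xpredT (fun i => i * mult f i)%N).
by rewrite (big_ltn (ltn0Sn n)) mul0n.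
Qed.

Definition single_partn n : partn n :=
  [ffun j : 'I_n => inord (if val j == 0%N then n else 0%N)].

Lemma single_partnE n (j : 'I_n) :
  (single_partn n j : nat) = if val j == 0%N then n else 0%N.
Proof. by rewrite ffunE inordK //; case: eqP. Qed.

Lemma is_partn_single n : is_partn (single_partn n).
Proof.
apply/andP; split.
  apply/forallP => i; apply/forallP => j; apply/implyP => le_ij.
  rewrite !single_partnE; case: eqP => [j0|_] //.
  by move: le_ij; rewrite j0 leqn0 => ->.
apply/eqP; case: n => [|n]; first by rewrite big_ord0.
by rewrite big_ord_recl single_partnE big1 ?addn0 // => j _; rewrite single_partnE.
Qed.

Lemma horner_sum_h (R : comNzRingType) n (x : R) :
  (map_poly intr (sum_h n)).[x] =
  \sum_(f : partn n | is_partn f)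
     \prod_(1 <= i < n.+1) (1 + x ^+ i) ^+ (n %/ i - mult f i).
Proof.
rewrite rmorph_sum horner_sum; apply: eq_bigr => f _.
rewrite rmorph_prod horner_prod; apply: eq_bigr => i _.
by rewrite !(rmorphXn, rmorphD) rmorph1 /= map_polyX !hornerE.
Qed.

Lemma sum_hpoly_neq0 (C : numFieldType) n (x u : C) : u != 0 ->
  (forall i, (0 < i <= n)%N -> 0 < (1 + x ^+ i) / u ^+ i) ->
  \sum_(f : partn n | is_partn f)
     \prod_(1 <= i < n.+1) (1 + x ^+ i) ^+ (n %/ i - mult f i) != 0.
Proof.
move=> u_neq0 p_gt0; set p := fun i => (1 + x ^+ i) / u ^+ i.
pose P (f : partn n) := \prod_(1 <= i < n.+1) p i ^+ (n %/ i - mult f i).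
have P_gt0 f : 0 < P f.
  by rewrite /P big_nat_cond prodr_gt0 // => i /andP[/p_gt0 ? _]; rewrite exprn_gt0.
rewrite (eq_bigr (fun f => P f * u ^+ hdeg n)) => [|f pf]; last first.
  rewrite -(hpoly_exponent_weight pf) -prodrXr -big_split /=.
  by apply: eq_bigr => i _; rewrite exprM -exprMn divfK ?expf_neq0.
rewrite -mulr_suml mulf_neq0 ?expf_neq0 // psumr_neq0 => [|f _]; last exact: ltW.
by apply/hasP; exists (single_partn n); rewrite ?mem_index_enum ?is_partn_single ?P_gt0.
Qed.

(* The Lucas sequence V_k(1, t) = a ^ k + b ^ k, where a + b = 1 and a b = t. *)
Fixpoint lucasV {R : pzRingType} (t : R) (k : nat) : R :=
  match k with
  | 0 => 2
  | 1 => 1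
  | (k'.+1 as k1).+1 => lucasV t k1 - t * lucasV t k'
  end.

Lemma lucasVSS (R : pzRingType) (t : R) k :
  lucasV t k.+2 = lucasV t k.+1 - t * lucasV t k.
Proof. by []. Qed.

Lemma nat_ind2 (P : nat -> Prop) :
  P 0%N -> P 1%N -> (forall k, P k -> P k.+1 -> P k.+2) -> forall k, P k.
Proof.
move=> P0 P1 PSS k; suff [] : P k /\ P k.+1 by [].
by elim: k => [|k [Pk Pk1]]; split => //; apply: PSS.
Qed.

Lemma rmorph_lucasV (R S : pzRingType) (f : {rmorphism R -> S}) t k :
  f (lucasV t k) = lucasV (f t) k.
Proof.
elim/nat_ind2: k => [|| k IHk IHk1]; first by rewrite rmorphD rmorph1.
  exact: rmorph1.
by rewrite !lucasVSS rmorphB rmorphM IHk IHk1.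
Qed.

Lemma horner_lucasV (R : comNzRingType) (x : R) k : (lucasV 'X k).[x] = lucasV x k.
Proof. by rewrite -horner_evalE rmorph_lucasV /= horner_evalE hornerX. Qed.

Lemma lucasV_1D_powers (F : fieldType) (y : F) k : 1 + y != 0 ->
  1 + y ^+ k = lucasV (y / (1 + y) ^+ 2) k * (1 + y) ^+ k.
Proof.
move=> Sy_neq0; elim/nat_ind2: k => [|| k IHk IHk1]; first by rewrite expr0 mulr1.
  by rewrite /= mul1r.
have Syk_neq0 m : (1 + y) ^+ m != 0 by rewrite expf_neq0.
rewrite lucasVSS (canRL (mulfK (Syk_neq0 _)) (esym IHk))
  (canRL (mulfK (Syk_neq0 _)) (esym IHk1)).
rewrite !exprS; move: (y ^+ k) ((1 + y) ^+ k) (Syk_neq0 k) => yk Syk Sk_neq0.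
by field; rewrite Sk_neq0 Sy_neq0.
Qed.

Lemma lucasV_quarter (R : numFieldType) k : lucasV (4^-1 : R) k = 2 * 2^-1 ^+ k.
Proof.
elim/nat_ind2: k => [|| k IHk IHk1]; first by rewrite expr0 mulr1.
  by rewrite /= expr1 divff ?pnatr_eq0.
by rewrite lucasVSS IHk IHk1 !exprS; field.
Qed.

Lemma lucasV_quarter_gt0 (R : numFieldType) k : 0 < lucasV (4^-1 : R) k.
Proof. by rewrite lucasV_quarter mulr_gt0 ?exprn_gt0 ?invr_gt0 ?ltr0n. Qed.

Lemma lucasV_succ_neq0 (R : numDomainType) (t : R) k : t != 0 ->
  lucasV t k = 0 -> lucasV t k.+1 != 0.
Proof.
move=> t_neq0; elim: k => [|k IHk] Vk0; first by rewrite oner_eq0.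
rewrite lucasVSS Vk0 sub0r oppr_eq0 mulf_eq0 (negPf t_neq0) /=.
by apply/eqP => /IHk; rewrite Vk0 eqxx.
Qed.

Lemma lucasV_gt0_of_ge0 (R : realDomainType) (t : R) d : 0 < t ->
  (forall i, (i <= d)%N -> 0 <= lucasV t i) -> forall j, (j < d)%N -> 0 < lucasV t j.
Proof.
move=> t_gt0 V_ge0 [|j] lt_jd; first by rewrite ltr0n.
rewrite lt_def V_ge0 ?andbT; last exact: ltnW.
apply/eqP => VSj0.
have : 0 <= lucasV t j.+2 by exact: V_ge0.
rewrite lucasVSS VSj0 sub0r oppr_ge0 pmulr_rle0 // => Vj_le0.
have Vj0 : lucasV t j = 0.
  by apply/eqP; rewrite eq_le Vj_le0 V_ge0 // (ltnW (ltnW lt_jd)).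
by have /eqP := lucasV_succ_neq0 (lt0r_neq0 t_gt0) Vj0.
Qed.

Lemma lucasV_first_root (R : rcfType) (s : R) d : 4^-1 < s -> lucasV s d = 0 ->
  exists t : R,
    [/\ 4^-1 < t, t <= s, lucasV t d = 0 & forall i, (i < d)%N -> 0 < lucasV t i].
Proof.
move=> lt_qs Vs0; pose P : {poly R} := \prod_(j < d.+1) lucasV 'X j.
have rootPE x : root P x = [exists j : 'I_d.+1, lucasV x j == 0].
  rewrite rootE horner_prod; under eq_bigr do rewrite horner_lucasV.
  by apply/prodf_eq0/existsP => [[j _ Vj0]|[j Vj0]]; exists j.
have rootP x i : (i <= d)%N -> lucasV x i = 0 -> root P x.
  move=> le_id Vi0; rewrite rootPE; apply/existsP.
  by exists (Ordinal (le_id : i < d.+1)%N); rewrite Vi0.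
have P_neq0 : P != 0.
  apply/eqP => P0; have /existsP[j] : [exists j : 'I_d.+1, lucasV (4^-1 : R) j == 0].
    by rewrite -rootPE P0 root0.
  by rewrite (negPf (lt0r_neq0 (lucasV_quarter_gt0 _ _))).
have s_root : root P s by exact: (rootP s d).
have s_in : s \in `]4^-1, s + 1[ by rewrite in_itv /= lt_qs ltrDl ltr01.
case: (next_rootP P 4^-1 (s + 1)) => [P0 | t _ Pt0 t_in no_root | c _ _ no_root];
  [by rewrite P0 eqxx in P_neq0 | | by have := no_root s s_in; rewrite s_root].
have lt_qt : 4^-1 < t by rewrite (itvP t_in).
have le_ts : t <= s.
  rewrite leNgt; apply/negP => lt_st.
  by have := no_root s; rewrite in_itv /= lt_qs lt_st s_root => /(_ isT).
have t_gt0 : 0 < t by apply: lt_trans lt_qt; rewrite invr_gt0 ltr0n.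
have V_ge0 i : (i <= d)%N -> 0 <= lucasV t i.
  move=> le_id; rewrite leNgt; apply/negP => Vi_lt0.
  have [x x_in] : {x | x \in `]4^-1, t[ & root (lucasV 'X i) x}.
    by apply: poly_ivtoo; rewrite ?ltW // !horner_lucasV pmulr_rlt0 ?lucasV_quarter_gt0.
  by rewrite rootE horner_lucasV => /eqP /(rootP x i le_id); apply/negP/no_root.
have V_gt0 := lucasV_gt0_of_ge0 t_gt0 V_ge0.
exists t; split => //; have : root P t by apply/eqP.
rewrite rootPE => /existsP[j /eqP Vj0].
have [lt_jd | le_dj] := ltnP j d; first by have := V_gt0 j lt_jd; rewrite Vj0 ltxx.
by have -> : d = j by apply/eqP; rewrite eqn_leq le_dj -ltnS ltn_ord.
Qed.

Lemma norm_eq1_expr (R : numDomainType) (y : R) n :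
  (0 < n)%N -> `|y ^+ n| = 1 -> `|y| = 1.
Proof. by move=> n_gt0 /eqP; rewrite normrX pexpr_eq1 // => /eqP. Qed.

Lemma Re_ge1_norm1 (C : numClosedFieldType) (w : C) : `|w| = 1 -> 1 <= 'Re w -> w = 1.
Proof.
move=> nw Rew_ge1; have [le_Re_norm eq_Re_norm] := leif_Re_Creal w.
have w_ge0 : 0 <= w by rewrite -eq_Re_norm eq_le le_Re_norm nw Rew_ge1.
by rewrite -(ger0_norm w_ge0) nw.
Qed.

Lemma rootC_Re_max_real (C : numClosedFieldType) n (x y : C) :
  (0 < n)%N -> x \is Num.real -> y ^+ n = x -> 'Re y <= 'Re (n.-root x).
Proof.
move=> n_gt0 x_real yn_x; case/real_ge0P: (Creal_Im y) => [Imy_ge0|Imy_lt0].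
  exact: rootC_Re_max.
rewrite -Re_conj; apply: rootC_Re_max => //.
  by rewrite -rmorphXn yn_x; apply/CrealP.
by rewrite Im_conj oppr_ge0 ltW.
Qed.

Lemma unit_div_1D_sqr (C : numClosedFieldType) (y : C) : `|y| = 1 -> 1 + y != 0 ->
  y / (1 + y) ^+ 2 = (2 + 2 * 'Re y)^-1.
Proof.
move=> ny Sy_neq0; have y_neq0 : y != 0 by rewrite -normr_eq0 ny oner_eq0.
have conj_y : y^* = y^-1 by rewrite invC_norm ny expr1n invr1 mul1r.
have -> : 2 + 2 * 'Re y = (1 + y) ^+ 2 / y by rewrite ReE conj_y; field.
by rewrite invf_div.
Qed.

Lemma exists_unit_Re (C : numClosedFieldType) (a : C) : a \is Num.real ->
  -1 <= a <= 1 -> exists y : C, [/\ `|y| = 1, 0 <= 'Im y & 'Re y = a].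
Proof.
move=> a_real /andP[a_geN1 a_le1].
have sqr_a_le1 : 0 <= 1 - a ^+ 2.
  by rewrite -(expr1n _ 2) subr_sqr mulr_ge0 // ?subr_ge0 // -lerBlDl sub0r.
set b := sqrtC (1 - a ^+ 2); have b_ge0 : 0 <= b by rewrite sqrtC_ge0.
have b_real : b \is Num.real by exact: ger0_real.
exists (a + 'i * b); rewrite Re_rect ?Im_rect //; split => //.
apply: (@norm_eq1_expr _ _ 2) => //.
by rewrite normrX normC2_Re_Im Re_rect ?Im_rect // sqrtCK addrC subrK.
Qed.

Lemma Re_N1 : 'Re (-1 : algC) = -1.
Proof. by apply/Creal_ReP; rewrite rpredN1. Qed.

Lemma rootCN1_of_lucasV_root (t : algR) d : 4^-1 < t -> lucasV t d = 0 ->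
  exists y : algC, [/\ y ^+ d = -1, 0 <= 'Im y & 'Re y = algRval ((2 * t)^-1 - 1)].
Proof.
move=> lt_qt Vt0; set a : algR := (2 * t)^-1 - 1.
have t_gt0 : 0 < t by apply: lt_trans lt_qt; rewrite invr_gt0 ltr0n.
have /andP[a_gtN1 a_lt1] : -1 < a < 1.
  have v_gt0 : 0 < (2 * t)^-1 by rewrite invr_gt0 mulr_gt0.
  have : (2 * t)^-1 * (2 * t) = 1 by rewrite mulVf ?lt0r_neq0 ?mulr_gt0.
  by rewrite /a; nra.
have [y [ny Imy_ge0 Rey]] : exists y : algC, [/\ `|y| = 1, 0 <= 'Im y & 'Re y = a].
  by apply: exists_unit_Re; rewrite ?algRvalP // !ltW.
have Sy_neq0 : 1 + y != 0.
  apply: contraTneq (a_gtN1 : -1 < algRval a) => Sy0.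
  have y_N1 : y = -1 by apply/eqP; rewrite -subr_eq0 opprK addrC Sy0.
  by rewrite -Rey y_N1 Re_N1 ltxx.
have yt : y / (1 + y) ^+ 2 = algRval t.
  rewrite unit_div_1D_sqr // Rey.
  have -> : 2 + 2 * algRval a = algRval (2 + 2 * a) by [].
  rewrite -fmorphV; congr algRval; rewrite /a; field.
  by rewrite lt0r_neq0 //= mulN1r addrCA subrr addr0 oner_eq0.
exists y; split => //.
have := lucasV_1D_powers d Sy_neq0; rewrite yt -rmorph_lucasV Vt0 rmorph0 mul0r.
by move/eqP; rewrite addrC addr_eq0 => /eqP.
Qed.

Lemma rootCN1_neqN1 d : (1 < d)%N -> d.-root (-1 : algC) != -1.
Proof.
move=> d_gt1; have d_gt0 := ltnW d_gt1.
apply/eqP => z_N1; have N1_d : (-1 : algC) ^+ d = -1 by rewrite -{1}z_N1 rootCK.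
have [w prim_w] := C_prim_root_exists d_gt0.
have wd1 : w ^+ d = 1 by apply/eqP; rewrite -(prim_order_dvd prim_w).
have : 'Re (- w) <= 'Re (d.-root (-1 : algC)).
  by apply: rootC_Re_max_real; rewrite ?rpredN1 // exprNn wd1 mulr1.
rewrite z_N1 Re_N1 raddfN lerN2 => Rew_ge1.
have w1 : w = 1.
  by apply: Re_ge1_norm1 Rew_ge1; apply: (norm_eq1_expr d_gt0); rewrite wd1 normr1.
have := prim_order_dvd prim_w 1; rewrite w1 expr1n eqxx dvdn1 => /eqP d1.
by rewrite d1 in d_gt1.
Qed.

Lemma Re_rootCN1_bounds d : (1 < d)%N -> -1 < 'Re (d.-root (-1 : algC)) < 1.
Proof.
move=> d_gt1; set z := d.-root (-1 : algC); have d_gt0 := ltnW d_gt1.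
have nz : `|z| = 1 by apply: (norm_eq1_expr d_gt0); rewrite rootCK // normrN normr1.
rewrite !real_ltNge ?rpredN1 ?rpred1 ?Creal_Re //; apply/andP; split.
  apply: contra (rootCN1_neqN1 d_gt1) => Rez_leN1.
  by rewrite -/z -eqr_oppLR; apply/eqP/Re_ge1_norm1; rewrite ?normrN // raddfN lerNr.
apply/negP => /(Re_ge1_norm1 nz) z1.
have /eqP := rootCK d_gt0 (-1 : algC).
by rewrite -/z z1 expr1n -addr_eq0 (pnatr_eq0 _ 2).
Qed.

Lemma rootCN1_1D_neq0 d : (1 < d)%N -> 1 + d.-root (-1 : algC) != 0.
Proof. by move=> d_gt1; rewrite addrC addr_eq0 rootCN1_neqN1. Qed.

Lemma rootCN1_1D_ratio_gt0 d i : (1 < d)%N -> (i < d)%N ->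
  0 < (1 + d.-root (-1 : algC) ^+ i) / (1 + d.-root (-1)) ^+ i.
Proof.
move=> d_gt1 lt_id; set z := d.-root (-1 : algC); have d_gt0 := ltnW d_gt1.
have nz : `|z| = 1 by apply: (norm_eq1_expr d_gt0); rewrite rootCK // normrN normr1.
have /andP[Rez_gtN1 Rez_lt1] := Re_rootCN1_bounds d_gt1.
have Sz_neq0 := rootCN1_1D_neq0 d_gt1.
pose a := in_algR (Creal_Re z); pose s : algR := (2 + 2 * a)^-1.
have a_gtN1 : -1 < a := Rez_gtN1.
have a_lt1 : a < 1 := Rez_lt1.
have sE : algRval s = z / (1 + z) ^+ 2 by rewrite unit_div_1D_sqr.
have lt_qs : 4^-1 < s by rewrite ltf_pV2 ?posrE; lra.
have Vs0 : lucasV s d = 0.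
  have := lucasV_1D_powers d Sz_neq0; rewrite rootCK // addrN -sE -rmorph_lucasV.
  move/esym/eqP; rewrite mulf_eq0 expf_eq0 (negPf Sz_neq0) andbF orbF.
  by rewrite fmorph_eq0 => /eqP.
have [t [lt_qt le_ts Vt0 Vt_gt0]] := lucasV_first_root lt_qs Vs0.
have [y [yd Imy_ge0 Rey]] := rootCN1_of_lucasV_root lt_qt Vt0.
have le_st : s <= t.
  have := rootC_Re_max d_gt0 yd Imy_ge0; rewrite Rey => le_Re.
  have : (2 * t)^-1 - 1 <= a := le_Re.
  have t_gt0 : 0 < t by apply: lt_trans lt_qt; rewrite invr_gt0 ltr0n.
  rewrite /s -[t]invrK lef_pV2 ?posrE ?invr_gt0 // ?invfM; lra.
have st : s = t by apply/eqP; rewrite eq_le le_st le_ts.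
rewrite (lucasV_1D_powers i Sz_neq0) mulfK ?expf_neq0 // -sE -rmorph_lucasV st.
exact: Vt_gt0.
Qed.

Lemma rootCN1_aligned d : (0 < d)%N ->
  exists2 u : algC, u != 0 & forall i, (0 < i < d)%N -> 0 < (1 + zeta2 d ^+ i) / u ^+ i.
Proof.
rewrite leq_eqVlt => /orP[/eqP <- | d_gt1].
  by exists 1 => [|i /andP[i_gt0 /(leq_trans i_gt0)]]; rewrite ?oner_eq0.
exists (1 + zeta2 d) => [|i /andP[_ lt_id]]; first exact: rootCN1_1D_neq0.
exact: rootCN1_1D_ratio_gt0.
Qed.

Theorem lemma5 (d r : nat) (G N : {poly int}) :
  (1 <= d)%N -> (r < d)%N -> is_G r G -> sum_h r = G * N ->
  (map_poly (fun z : int => z%:~R : algC) N).[zeta2 d] != 0.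
Proof.
move=> d_gt0 lt_rd _ sum_hE.
have [u u_neq0 aligned_u] := rootCN1_aligned d_gt0.
have : (map_poly intr (sum_h r)).[zeta2 d] != 0.
  rewrite horner_sum_h; apply: sum_hpoly_neq0 u_neq0 _ => i /andP[i_gt0 le_ir].
  by apply: aligned_u; rewrite i_gt0 (leq_ltn_trans le_ir).
by rewrite sum_hE rmorphM hornerM mulf_eq0 negb_or => /andP[].
Qed.
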